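(* Let $(a_k)_{k\ge1}$ be a sequence of natural numbers (all $a_k\ge1$), let $m,n\in\mathbb N$ and let $T=(i_1,\dots,i_m;\varepsilon_1,\dots,\varepsilon_m)$ with $i_r\in\{1,\dots,n\}$, $\varepsilon_r\in\{\pm1\}$. Then $$\mathrm{mult}(T)=\sum_{\substack{\varnothing\ne J\subseteq\min(\mathcal U_T)\\ \bigvee J=\hat1}}(-1)^{|J|+1}.$$
   Context: $\Pi_m$ denotes the set of partitions of $[m]=\{1,\dots,m\}$ into nonempty blocks, partially ordered by refinement ($\pi\le\sigma$ iff every block of $\pi$ is contained in a block of $\sigma$); $\hat1$ is the one-block partition $\{[m]\}$, and $\bigvee J$ denotes the join (least upper bound) of a family $J\subseteq\Pi_m$ in this lattice. $|\pi|$ is the number of blocks of $\pi$, and the Möbius function satisfies $\mu(\pi,\hat1)=(-1)^{|\pi|-1}(|\pi|-1)!$. For $B\subseteq[m]$ put $\Sigma(B;T)=\sum_{r\in B}\varepsilon_r a_{i_r}$. Let $\mathcal U_T=\{\pi\in\Pi_m:\Sigma(B;T)=0\text{ for every block }B\in\pi\}$, let $\min(\mathcal U_T)$ be the set of minimal elements of $\mathcal U_T$ with respect to $\le$, and define the multiplicity $\mathrm{mult}(T)=\sum_{\pi\in\mathcal U_T}\mu(\pi,\hat1)$. *)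

From mathcomp Require Import all_boot all_order all_algebra.
Set Implicit Arguments. Unset Strict Implicit. Unset Printing Implicit Defensive.
Import GRing.Theory Num.Theory.
Local Open Scope ring_scope.

(* Partitions of [m] = 'I_m (element r : 'I_m stands for r+1) are
   represented as sets of blocks P : {set {set 'I_m}} with
   finset's [partition P [set: 'I_m]] (cover = [m], pairwise disjoint,
   no empty block). *)
Definition partm (m : nat) (P : {set {set 'I_m}}) : bool :=
  partition P [set: 'I_m].

Definition refines (m : nat) (P Q : {set {set 'I_m}}) : bool :=
  [forall B in P, [exists C in Q, B \subset C]].

Definition hat1 (m : nat) : {set {set 'I_m}} := [set [set: 'I_m]].

Definition is_join (m : nat) (J : {set {set {set 'I_m}}})
    (s : {set {set 'I_m}}) : bool :=
  [&& partm s, [forall P in J, refines P s] &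
      [forall t : {set {set 'I_m}},
         (partm t && [forall P in J, refines P t]) ==> refines s t]].

(* Möbius value mu(pi, hat1) = (-1)^(|pi|-1) (|pi|-1)! *)
Definition mu1 (m : nat) (P : {set {set 'I_m}}) : int :=
  (-1) ^+ (#|P|.-1) * (#|P|.-1)`!%:Z.

Definition SigmaB (m : nat) (a : nat -> nat) (i : 'I_m -> nat)
    (eps : 'I_m -> int) (B : {set 'I_m}) : int :=
  \sum_(r in B) eps r * (a (i r))%:Z.

Definition UT (m : nat) (a : nat -> nat) (i : 'I_m -> nat)
    (eps : 'I_m -> int) : {set {set {set 'I_m}}} :=
  [set P : {set {set 'I_m}} | partm P && [forall B in P, SigmaB a i eps B == 0]].

Definition minUT (m : nat) (a : nat -> nat) (i : 'I_m -> nat)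
    (eps : 'I_m -> int) : {set {set {set 'I_m}}} :=
  [set P in UT a i eps | [forall Q in UT a i eps, refines Q P ==> (Q == P)]].

Definition mult (m : nat) (a : nat -> nat) (i : 'I_m -> nat)
    (eps : 'I_m -> int) : int :=
  \sum_(P in UT a i eps) mu1 P.

(* Every partition pi in U_T lies above some minimal element of U_T, so the
   nonempty sets J of minimal elements below pi carry signs (-1)^(|J|+1) that
   sum to 1. Exchanging sums, and using that U_T is closed upwards, mult(T)
   becomes the sum over nonempty J in min(U_T) of (-1)^(|J|+1) times the sum of
   mu(pi, 1) over the common upper bounds pi of J. That inner sum is 1 when the
   join of J is the one-block partition and 0 otherwise: if the join has a
   block b other than [m], the upper bounds having b as a block cancel against
   those obtained from them by merging b with one of their k - 1 other blocks,
   since mu_k + (k - 1) mu_(k-1) = 0 for mu_k = (-1)^(k-1) (k-1)!. *)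

From mathcomp Require Import all_boot all_order all_algebra.
Import GRing.Theory Num.Theory.
Local Open Scope ring_scope.
Set Implicit Arguments. Unset Strict Implicit. Unset Printing Implicit Defensive.

Definition mobius1 (k : nat) : int := (-1) ^+ k.-1 * (k.-1)`!%:Z.

Lemma mu1E m (P : {set {set 'I_m}}) : mu1 P = mobius1 #|P|.
Proof. by []. Qed.

Lemma mobius1_recS k : mobius1 k.+2 + mobius1 k.+1 *+ k.+1 = 0.
Proof. by rewrite /mobius1 /= factS PoszM exprS mulN1r mulNr -mulrnAr -mulr_natl natz addNr. Qed.

Section SubsetSigns.
Variables (R : pzRingType) (T : finType).

Lemma sum_subsets_sign (S : {set T}) :
  S != set0 -> \sum_(J : {set T} | J \subset S) (-1) ^+ #|J| = 0 :> R.
Proof.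
case/set0Pn=> x xS; rewrite (bigID (fun J : {set T} => x \in J)) /=.
rewrite (reindex_onto (fun J : {set T} => x |: J) (fun J : {set T} => J :\ x)) /=; last first.
  by move=> J /andP[_ xJ]; rewrite setD1K.
rewrite (eq_bigl (fun J : {set T} => (J \subset S) && (x \notin J))); last first.
  move=> J; rewrite setU11 subUset sub1set xS andbT /=.
  case: (boolP (x \in J)) => xJ; last by rewrite setU1K ?eqxx.
  rewrite andbF; apply/negbTE/negP => /andP[_ /eqP e].
  by move: xJ; rewrite -e setD11.
rewrite -big_split big1 //= => J /andP[_ xJ].
by rewrite cardsU1 xJ exprS mulN1r addNr.
Qed.

Lemma sum_nonempty_subsets_sign (S : {set T}) :
  S != set0 -> \sum_(J : {set T} | (J != set0) && (J \subset S)) (-1) ^+ #|J|.+1 = 1 :> R.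
Proof.
move/sum_subsets_sign; rewrite (bigD1 set0) ?sub0set //= cards0 expr0.
move/eqP; rewrite addrC addr_eq0 => /eqP sumE.
under eq_bigl do rewrite andbC.
by under eq_bigr do rewrite exprS mulN1r; rewrite sumrN sumE opprK.
Qed.

End SubsetSigns.

Section Partitions.
Variable m : nat.
Implicit Types (P Q r s : {set {set 'I_m}}) (A B C D : {set 'I_m}) (x : 'I_m).

Lemma partm_pblock_mem P x : partm P -> pblock P x \in P.
Proof. by move=> hP; rewrite pblock_mem // (cover_partition hP) inE. Qed.

Lemma partm_mem_pblock P x : partm P -> x \in pblock P x.
Proof. by move=> hP; rewrite mem_pblock (cover_partition hP) inE. Qed.

Lemma partm_pblockE P B x : partm P -> B \in P -> x \in B -> pblock P x = B.
Proof. by move/partition_trivIset; apply: def_pblock. Qed.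

Lemma partm_block_eq P A B x :
  partm P -> A \in P -> B \in P -> x \in A -> x \in B -> A = B.
Proof.
by move=> hP hA hB xA xB; rewrite -(partm_pblockE hP hA xA) (partm_pblockE hP hB xB).
Qed.

Lemma partm_sub_block P A B : partm P -> A \in P -> B \in P -> A \subset B -> A = B.
Proof.
move=> hP hA hB AB; have /set0Pn[x xA] := partition_neq0 hP hA.
exact: partm_block_eq hP hA hB xA (subsetP AB x xA).
Qed.

Lemma partm_blockfun P (f : 'I_m -> {set 'I_m}) :
  set0 \notin P -> (forall x, f x \in P) -> (forall x, x \in f x) ->
  (forall B x, B \in P -> x \in B -> B = f x) -> partm P.
Proof.
move=> P0 fP fx Pf; rewrite /partm /partition (negPf P0) andbT; apply/andP; split.
  by apply/eqP/setP=> x; rewrite inE; apply/bigcupP; exists (f x).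
apply/trivIsetP=> A B hA hB; rewrite -setI_eq0; apply: contraR => /set0Pn[x].
by rewrite inE => /andP[xA xB]; rewrite (Pf A x) // (Pf B x).
Qed.

Lemma eq_partm P Q : partm P -> partm Q -> pblock P =1 pblock Q -> P = Q.
Proof.
suff sub r s : partm r -> partm s -> pblock r =1 pblock s -> r \subset s.
  by move=> hP hQ e; apply/eqP; rewrite eqEsubset !sub // => x; rewrite e.
move=> hr hs e; apply/subsetP=> B hB; have /set0Pn[x xB] := partition_neq0 hr hB.
by rewrite -(partm_pblockE hr hB xB) e partm_pblock_mem.
Qed.

Lemma refines_pblock P Q x :
  partm P -> partm Q -> refines P Q -> pblock P x \subset pblock Q x.
Proof.
move=> hP hQ /forall_inP/(_ _ (partm_pblock_mem x hP))/existsP[D /andP[hD sub]].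
by rewrite (partm_pblockE hQ hD (subsetP sub _ (partm_mem_pblock x hP))).
Qed.

Lemma refines_refl P : refines P P.
Proof. by apply/forall_inP=> B hB; apply/existsP; exists B; rewrite hB subxx. Qed.

Lemma refines_trans P Q s : refines P Q -> refines Q s -> refines P s.
Proof.
move=> /forall_inP hPQ /forall_inP hQR; apply/forall_inP=> A /hPQ/existsP[B /andP[hB AB]].
have /existsP[C /andP[hC BC]] := hQR B hB.
by apply/existsP; exists C; rewrite hC (subset_trans AB BC).
Qed.

Lemma refines_anti P Q : partm P -> partm Q -> refines P Q -> refines Q P -> P = Q.
Proof.
move=> hP hQ hPQ hQP; apply: eq_partm => // x.
by apply/eqP; rewrite eqEsubset !refines_pblock.
Qed.

Lemma partm_hat1 : (0 < m)%N -> partm (hat1 m).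
Proof.
move=> m_gt0; apply: (partm_blockfun (f := fun=> setT)) => [|x|x|B x] //.
- by rewrite inE eq_sym; apply/set0Pn; exists (Ordinal m_gt0).
- by rewrite inE.
- by rewrite inE.
- by rewrite inE => /eqP.
Qed.

Lemma refines_hat1 P : refines P (hat1 m).
Proof. by apply/forall_inP=> B _; apply/existsP; exists setT; rewrite inE eqxx subsetT. Qed.

Lemma hat1_refines s : partm s -> refines (hat1 m) s -> s = hat1 m.
Proof.
move=> hs /forall_inP/(_ _ (set11 _))/existsP[C /andP[hC TC]].
have CT : C = setT by apply/eqP; rewrite eqEsubset subsetT.
rewrite CT in hC; apply/setP=> D; rewrite inE; apply/idP/eqP=> [hD|->] //.
exact: partm_sub_block hs hD hC (subsetT D).
Qed.

End Partitions.

Section UpperBounds.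
Variables (m : nat) (J : {set {set {set 'I_m}}}).
Hypothesis partJ : {in J, forall Q, partm Q}.
Implicit Types (s t : {set {set 'I_m}}) (A B C S : {set 'I_m}) (x y : 'I_m).

Definition saturated S :=
  [forall Q in J, forall B in Q, forall x in B, forall y in B, (x \in S) == (y \in S)].

Definition upper_bounds := [set s | partm s && [forall Q in J, refines Q s]].

Lemma saturatedP S :
  reflect (forall Q B x y, Q \in J -> B \in Q -> x \in B -> y \in B -> (x \in S) = (y \in S))
          (saturated S).
Proof.
apply: (iffP idP) => [satS Q B x y hQ hB hx hy | satS].
  apply/eqP; move: satS => /forall_inP/(_ Q hQ)/forall_inP/(_ B hB).
  by move=> /forall_inP/(_ x hx)/forall_inP/(_ y hy).
apply/forall_inP=> Q hQ; apply/forall_inP=> B hB; apply/forall_inP=> x hx.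
by apply/forall_inP=> y hy; apply/eqP; apply: satS hQ hB hx hy.
Qed.

Lemma saturatedT : saturated setT.
Proof. by apply/saturatedP=> *; rewrite !inE. Qed.

Lemma saturatedC S : saturated S -> saturated (~: S).
Proof. by move=> /saturatedP satS; apply/saturatedP=> Q B x y *; rewrite !inE (satS Q B x y). Qed.

Lemma saturatedI A B : saturated A -> saturated B -> saturated (A :&: B).
Proof.
move=> /saturatedP satA /saturatedP satB; apply/saturatedP=> Q D x y *.
by rewrite !inE (satA Q D x y) // (satB Q D x y).
Qed.

Lemma saturatedU A B : saturated A -> saturated B -> saturated (A :|: B).
Proof.
by move=> satA satB; rewrite -[_ :|: _]setCK setCU saturatedC // saturatedI // saturatedC.
Qed.

Lemma saturatedD A B : saturated A -> saturated B -> saturated (A :\: B).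
Proof. by move=> satA satB; rewrite setDE saturatedI // saturatedC. Qed.

Lemma upper_boundsP s :
  reflect (partm s /\ {in s, forall C, saturated C}) (s \in upper_bounds).
Proof.
rewrite inE; apply: (iffP andP) => -[hs hsat]; split=> //.
  move=> C hC; apply/saturatedP=> Q B x y hQ hB hx hy.
  have /existsP[D /andP[hD BD]] := forall_inP (forall_inP hsat Q hQ) B hB.
  have C_D z : z \in B -> (z \in C) = (C == D).
    move=> /(subsetP BD) zD; apply/idP/eqP=> [zC|->] //.
    exact: partm_block_eq hs hC hD zC zD.
  by rewrite !C_D.
apply/forall_inP=> Q hQ; apply/forall_inP=> B hB.
have /set0Pn[x hx] := partition_neq0 (partJ hQ) hB.
apply/existsP; exists (pblock s x); rewrite partm_pblock_mem //=; apply/subsetP=> y hy.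
by rewrite -(saturatedP _ (hsat _ (partm_pblock_mem x hs)) Q B x y) // partm_mem_pblock.
Qed.

Lemma hat1_upper_bound : (0 < m)%N -> hat1 m \in upper_bounds.
Proof.
by move=> m_gt0; rewrite inE partm_hat1 //; apply/forall_inP=> Q _; apply: refines_hat1.
Qed.

Lemma is_join_hat1E : (0 < m)%N -> is_join J (hat1 m) = (upper_bounds == [set hat1 m]).
Proof.
move=> m_gt0; rewrite /is_join partm_hat1 //=.
have -> /= : [forall P in J, refines P (hat1 m)] by apply/forall_inP=> Q _; apply: refines_hat1.
apply/forallP/eqP=> [ub1 | ub1 t].
  apply/setP=> t; apply/idP/set1P=> [ht | ->]; last exact: hat1_upper_bound.
  move: ht; rewrite inE => /andP[hs hr]; apply: hat1_refines => //.
  by apply: (implyP (ub1 t)); rewrite hs.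
apply/implyP=> ht; have : t \in upper_bounds by rewrite inE.
by rewrite ub1 => /set1P ->; apply: refines_refl.
Qed.

End UpperBounds.

Section MergeSplit.
Variables (m : nat) (B : {set 'I_m}).
Implicit Types (r s : {set {set 'I_m}}) (C D : {set 'I_m}) (x : 'I_m).

Definition merge_blocks r C := (B :|: C) |: (r :\ B :\ C).

Definition split_block s C := [set B; C :\: B] :|: (s :\ C).

Section Merge.
Variables (r : {set {set 'I_m}}) (C : {set 'I_m}).
Hypotheses (hr : partm r) (Br : B \in r) (Cr : C \in r) (CB : C != B).

Lemma blockU_notin : B :|: C \notin r.
Proof.
apply: contraNN CB => BCr; have BCB := partm_sub_block hr Br BCr (subsetUl B C).
by rewrite (partm_sub_block hr Cr Br) // BCB subsetUr.
Qed.

Lemma blockU_setD : (B :|: C) :\: B = C.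
Proof.
rewrite setDUl setDv set0U; apply/setDidPl; rewrite -setI_eq0; apply: contraNT CB.
by case/set0Pn=> x; rewrite inE => /andP[xC xB]; rewrite (partm_block_eq hr Cr Br xC xB).
Qed.

Lemma partm_merge : partm (merge_blocks r C).
Proof.
pose f x := if x \in B :|: C then B :|: C else pblock r x.
apply: (partm_blockfun (f := f)) => [|x|x|D x].
- rewrite !inE negb_or (partition0 hr) !andbF andbT eq_sym setU_eq0 negb_and.
  by rewrite (partition_neq0 hr Br).
- rewrite /f !inE; case: ifPn => [_|xBC]; first by rewrite eqxx.
  rewrite partm_pblock_mem // !andbT; apply/orP; right.
  by apply/andP; split; apply: contraNneq xBC => <-; rewrite partm_mem_pblock ?orbT.
- by rewrite /f; case: ifP => // _; apply: partm_mem_pblock.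
- rewrite !inE => /orP[/eqP-> xBC | /and3P[DC DB Dr] xD]; first by rewrite /f xBC.
  have xBC : x \notin B :|: C.
    rewrite inE negb_or; apply/andP; split.
      by apply: contraNN DB => xB; apply/eqP; apply: partm_block_eq hr Dr Br xD xB.
    by apply: contraNN DC => xC; apply/eqP; apply: partm_block_eq hr Dr Cr xD xC.
  by rewrite /f (negPf xBC) (partm_pblockE hr Dr xD).
Qed.

Lemma notin_merge : B \notin merge_blocks r C.
Proof. by rewrite !inE eqxx andbF orbF; apply: contraNneq blockU_notin => <-. Qed.

Lemma card_merge : #|merge_blocks r C| = #|r|.-1.
Proof.
have notinD : B :|: C \notin r :\ B :\ C by rewrite !inE (negPf blockU_notin) !andbF.
rewrite cardsU1 notinD.
by rewrite (cardsD1 B r) Br (cardsD1 C (r :\ B)) !inE CB Cr.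
Qed.

Lemma merge_blocksK : split_block (merge_blocks r C) (B :|: C) = r.
Proof.
rewrite /split_block /merge_blocks blockU_setD setU1K; last first.
  by rewrite !inE (negPf blockU_notin) !andbF.
by rewrite -setUA setD1K ?setD1K // !inE CB Cr.
Qed.

End Merge.

Lemma sum_mu1_merge r : partm r -> B \in r -> (1 < #|r|)%N ->
  mu1 r + \sum_(C in r :\ B) mu1 (merge_blocks r C) = 0.
Proof.
move=> hr Br r_gt1; rewrite (eq_bigr (fun=> mobius1 #|r|.-1)); last first.
  by move=> C; rewrite !inE => /andP[CB Cr]; rewrite mu1E card_merge.
rewrite sumr_const mu1E (cardsD1 B r) Br in r_gt1 *.
by case: #|r :\ B| r_gt1 => [|k] // _; apply: mobius1_recS.
Qed.

Section Split.
Variables (s : {set {set 'I_m}}) (C : {set 'I_m}).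
Hypotheses (hs : partm s) (Cs : C \in s) (BC : B \proper C) (B0 : B != set0).

Lemma splitD_neq0 : C :\: B != set0.
Proof. by case/properP: BC => _ [x xC xB]; apply/set0Pn; exists x; rewrite inE xB. Qed.

Lemma partm_split : partm (split_block s C).
Proof.
have BsubC := proper_sub BC.
pose f x := if x \in B then B else if x \in C then C :\: B else pblock s x.
apply: (partm_blockfun (f := f)) => [|x|x|D x].
- by rewrite !inE (partition0 hs) andbF orbF !(eq_sym set0) negb_or B0 splitD_neq0.
- rewrite /f !inE; case: ifP => [_|xB]; first by rewrite eqxx.
  case: ifPn => [_|xC]; first by rewrite eqxx orbT.
  rewrite partm_pblock_mem // andbT; apply/orP; right.
  by apply: contraNneq xC => <-; apply: partm_mem_pblock.
- rewrite /f; case: ifP => // xB; case: ifP => [xC|_]; first by rewrite inE xB.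
  exact: partm_mem_pblock.
- rewrite !inE /f => /orP[/orP[/eqP-> -> // | /eqP->] | /andP[DC Ds] xD].
    by rewrite inE => /andP[/negPf-> ->].
  have xC : x \notin C.
    by apply: contraNN DC => xC; apply/eqP; apply: partm_block_eq hs Ds Cs xD xC.
  have xB : x \notin B by apply: contraNN xC; apply: (subsetP BsubC).
  by rewrite (negPf xB) (negPf xC) (partm_pblockE hs Ds xD).
Qed.

Lemma split_blockK : merge_blocks (split_block s C) (C :\: B) = s.
Proof.
have BsubC := proper_sub BC.
have /set0Pn[x xB] := B0.
have CB : C != B by rewrite eq_sym (proper_neq BC).
have CCB : C != C :\: B by apply/eqP=> e; move: (subsetP BsubC x xB); rewrite {1}e inE xB.
have Bs : B \notin s by apply: contraNN CB => Bs; rewrite (partm_sub_block hs Bs Cs BsubC).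
have CBs : C :\: B \notin s.
  by apply: contraNN CCB => CBs; rewrite (partm_sub_block hs CBs Cs (subsetDl C B)).
rewrite /merge_blocks /split_block.
have -> : B :|: C :\: B = C by rewrite -{1}(setIidPr BsubC) setID.
suff -> : ([set B; C :\: B] :|: (s :\ C)) :\ B :\ (C :\: B) = s :\ C by rewrite setD1K.
apply/setP=> D; rewrite !inE; case: (eqVneq D C) => [-> | DC] /=.
  by rewrite (negPf CB) (negPf CCB).
case: (eqVneq D B) => [-> | DB] /=; first by rewrite andbF (negPf Bs).
by case: (eqVneq D (C :\: B)) => [-> | _] /=; first by rewrite (negPf CBs).
Qed.

End Split.

End MergeSplit.

Section Atom.
Variables (m : nat) (J : {set {set {set 'I_m}}}) (x0 : 'I_m).
Hypothesis partJ : {in J, forall Q, partm Q}.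
Implicit Types (r s : {set {set 'I_m}}) (C S : {set 'I_m}) (x : 'I_m).

(* The block of the join of J that contains x0. *)
Definition atom := \bigcap_(S | saturated J S && (x0 \in S)) S.

Lemma saturated_atom : saturated J atom.
Proof.
apply: (big_ind (saturated J)) => [|A B|S /andP[] //]; first exact: saturatedT.
exact: saturatedI.
Qed.

Lemma atom_x0 : x0 \in atom.
Proof. by apply/bigcapP=> S /andP[]. Qed.

Lemma atom_sub S x : saturated J S -> x \in atom -> x \in S -> atom \subset S.
Proof.
move=> satS xa xS; have [x0S | x0S] := boolP (x0 \in S).
  by apply: bigcap_inf; rewrite satS.
have /subsetP/(_ x xa) : atom \subset ~: S by apply: bigcap_inf; rewrite saturatedC // inE x0S.
by rewrite inE xS.
Qed.

Lemma atom_sub_pblock s : s \in upper_bounds J -> atom \subset pblock s x0.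
Proof.
case/(upper_boundsP partJ)=> hs sat.
by apply: (atom_sub (x := x0)); rewrite ?atom_x0 ?partm_mem_pblock ?sat ?partm_pblock_mem.
Qed.

Lemma upper_bounds_atomT : atom = setT -> upper_bounds J = [set hat1 m].
Proof.
have m_gt0 : (0 < m)%N := leq_ltn_trans (leq0n x0) (ltn_ord x0).
move=> aT; apply/setP=> s; apply/idP/set1P=> [s_ub | ->]; last exact: hat1_upper_bound.
have hs : partm s by case/(upper_boundsP partJ): s_ub.
apply: hat1_refines => //; apply/forall_inP=> _ /set1P->; apply/existsP.
by exists (pblock s x0); rewrite partm_pblock_mem // -aT atom_sub_pblock.
Qed.

Lemma atom_neq0 : atom != set0.
Proof. by apply/set0Pn; exists x0; apply: atom_x0. Qed.

Lemma atom_proper_pblock s : s \in upper_bounds J -> atom \notin s -> atom \proper pblock s x0.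
Proof.
move=> s_ub aNs; have [hs _] := upper_boundsP partJ _ s_ub.
rewrite properEneq atom_sub_pblock // andbT.
by apply: contraNneq aNs => ->; apply: partm_pblock_mem.
Qed.

Lemma merge_upper_bound r C :
  r \in upper_bounds J -> atom \in r -> C \in r -> merge_blocks atom r C \in upper_bounds J.
Proof.
case/(upper_boundsP partJ)=> hr sat ar Cr; apply/(upper_boundsP partJ).
split; first exact: partm_merge.
by move=> D; rewrite !inE => /orP[/eqP-> | /and3P[_ _ /sat //]]; apply: saturatedU; apply: sat.
Qed.

Definition split_at s := (split_block atom s (pblock s x0), pblock s x0 :\: atom).

Lemma split_atK s : s \in upper_bounds J -> atom \notin s ->
  merge_blocks atom (split_at s).1 (split_at s).2 = s.
Proof.
move=> s_ub aNs; have [hs _] := upper_boundsP partJ _ s_ub.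
exact: split_blockK (partm_pblock_mem x0 hs) (atom_proper_pblock s_ub aNs) atom_neq0.
Qed.

Lemma split_at_upper_bound s : s \in upper_bounds J -> atom \notin s ->
  [&& (split_at s).1 \in upper_bounds J, atom \in (split_at s).1
    & (split_at s).2 \in (split_at s).1 :\ atom].
Proof.
move=> s_ub aNs; have [hs sat] := upper_boundsP partJ _ s_ub.
have Cs := partm_pblock_mem x0 hs.
apply/and3P; split=> /=; last 1 first.
- rewrite !inE eqxx orbT andbT; apply/eqP=> e.
  by have := atom_x0; rewrite -{1}e inE atom_x0.
- apply/(upper_boundsP partJ); split.
    exact: partm_split Cs (atom_proper_pblock s_ub aNs) atom_neq0.
  move=> D; rewrite !inE => /orP[/orP[]/eqP-> | /andP[_ /sat //]].
    exact: saturated_atom.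
  by apply: saturatedD (sat _ Cs) saturated_atom.
- by rewrite !inE eqxx.
Qed.

Lemma merge_atK r C : r \in upper_bounds J -> atom \in r -> C \in r :\ atom ->
  split_at (merge_blocks atom r C) = (r, C).
Proof.
move=> r_ub ar /setD1P[Ca Cr]; have [hr _] := upper_boundsP partJ _ r_ub.
have x0M : x0 \in atom :|: C by rewrite inE atom_x0.
rewrite /split_at (partm_pblockE (partm_merge hr ar Cr) (setU11 _ _) x0M).
by rewrite merge_blocksK // (blockU_setD hr ar Cr Ca).
Qed.

Lemma sum_upper_bounds_merge (R : nmodType) (G : {set {set 'I_m}} -> R) :
  \sum_(s in upper_bounds J | atom \notin s) G s =
  \sum_(r in upper_bounds J | atom \in r) \sum_(C in r :\ atom) G (merge_blocks atom r C).
Proof.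
rewrite pair_big_dep (reindex_onto (fun p => merge_blocks atom p.1 p.2) split_at) /=; last first.
  by move=> s /andP[]; apply: split_atK.
apply: eq_bigl => -[r C] /=; apply/idP/idP=> [/andP[/andP[s_ub aNs] /eqP rC] | ].
  by move: (split_at_upper_bound s_ub aNs); rewrite rC andbA.
case/andP=> /andP[r_ub ar] CrA; have /setD1P[Ca Cr] := CrA.
have [hr _] := upper_boundsP partJ _ r_ub.
by rewrite merge_upper_bound ?notin_merge ?merge_atK //= eqxx.
Qed.

Section ProperAtom.
Hypothesis aT : atom != setT.

Lemma two_blocks_upper_bound : [set atom; ~: atom] \in upper_bounds J.
Proof.
have /properP[_ [y _ ya]] : atom \proper setT by rewrite properT.
apply/(upper_boundsP partJ); split; last first.
  by move=> C /set2P[]->; [|apply: saturatedC]; apply: saturated_atom.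
apply: (partm_blockfun (f := fun x => if x \in atom then atom else ~: atom)) => [|x|x|C x].
- rewrite !inE negb_or !(eq_sym set0); apply/andP; split; apply/set0Pn.
    by exists x0; apply: atom_x0.
  by exists y; rewrite inE.
- by case: ifP; rewrite !inE eqxx ?orbT.
- by case: ifPn; rewrite ?inE.
- by case/set2P=> -> xC; [rewrite xC | move: xC; rewrite inE => /negPf->].
Qed.

Lemma upper_bounds_neq_hat1 : upper_bounds J != [set hat1 m].
Proof.
apply: contraNneq aT => ub1; have := two_blocks_upper_bound.
rewrite ub1 => /set1P t1; have := set21 atom (~: atom).
by rewrite t1 inE.
Qed.

Lemma sum_mu1_upper_bounds_proper : \sum_(s in upper_bounds J) mu1 s = 0.
Proof.
have /properP[_ [y _ ya]] : atom \proper setT by rewrite properT.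
rewrite (bigID (fun s => atom \in s)) /= sum_upper_bounds_merge -big_split big1 //=.
move=> r /andP[/(upper_boundsP partJ)[hr _] ar]; apply: sum_mu1_merge => //.
apply/card_gt1P; exists atom, (pblock r y); rewrite ar partm_pblock_mem //.
by split=> //; apply: contraNneq ya => ->; apply: partm_mem_pblock.
Qed.

End ProperAtom.

End Atom.

Lemma sum_mu1_upper_bounds m (J : {set {set {set 'I_m}}}) :
  (0 < m)%N -> {in J, forall Q, partm Q} ->
  \sum_(s in upper_bounds J) mu1 s = if is_join J (hat1 m) then 1 else 0.
Proof.
move=> m_gt0 partJ; rewrite is_join_hat1E //.
have [aT | aT] := eqVneq (atom J (Ordinal m_gt0)) setT.
  by rewrite (upper_bounds_atomT partJ aT) eqxx big_set1 mu1E cards1.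
by rewrite (negPf (upper_bounds_neq_hat1 partJ aT)) (sum_mu1_upper_bounds_proper partJ aT).
Qed.

Section ZeroSumPartitions.
Variables (m : nat) (a : nat -> nat) (i : 'I_m -> nat) (eps : 'I_m -> int).
Local Notation U := (UT a i eps).
Local Notation M := (minUT a i eps).
Implicit Types (P Q : {set {set 'I_m}}) (J : {set {set {set 'I_m}}}).

Lemma UT_partm P : P \in U -> partm P.
Proof. by rewrite inE => /andP[]. Qed.

Lemma minUT_UT : {subset M <= U}.
Proof. by move=> P; rewrite inE => /andP[]. Qed.

Lemma UT_refines Q P : Q \in U -> partm P -> refines Q P -> P \in U.
Proof.
rewrite !inE => /andP[hQ /forall_inP Q0] hP QP; rewrite hP /=; apply/forall_inP=> C hC.
have coverC : cover (Q ::&: C) = C.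
  apply/setP=> x; apply/bigcupP/idP=> [[B] | xC].
    by rewrite inE => /andP[_ BC]; apply: (subsetP BC).
  exists (pblock Q x); last exact: partm_mem_pblock.
  by rewrite inE partm_pblock_mem //= -(partm_pblockE hP hC xC) refines_pblock.
rewrite /SigmaB -coverC big_trivIset ?trivIsetI ?(partition_trivIset hQ) //.
by apply/eqP/big1=> B; rewrite inE => /andP[/Q0/eqP].
Qed.

Lemma exists_minUT P : P \in U -> exists2 Q, Q \in M & refines Q P.
Proof.
move=> PU; pose below Q := [set R in U | refines R Q].
have PP : (P \in U) && refines P P by rewrite PU refines_refl.
case: (@arg_minnP _ P (fun Q => (Q \in U) && refines Q P) (fun Q => #|below Q|) PP).
move=> Q /andP[QU QP] Qmin.
exists Q => //; rewrite inE QU; apply/forall_inP=> R RU; apply/implyP=> RQ.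
have RP := refines_trans RQ QP.
apply/eqP/refines_anti; rewrite ?UT_partm //.
apply: contraTT (Qmin R _) => [QR|]; last by rewrite RU.
rewrite -ltnNge; apply: proper_card; apply/properP; split.
  by apply/subsetP=> X; rewrite !inE => /andP[-> XR]; apply: refines_trans XR RQ.
by exists Q; rewrite inE QU ?refines_refl.
Qed.

Lemma sum_UT_minimal (R : pzRingType) (f : {set {set 'I_m}} -> R) :
  \sum_(P in U) f P =
  \sum_(J | (J != set0) && (J \subset M)) (-1) ^+ #|J|.+1 * \sum_(P in upper_bounds J) f P.
Proof.
pose below P := [set Q in M | refines Q P].
transitivity (\sum_(P in U) \sum_(J | (J != set0) && (J \subset below P)) (-1) ^+ #|J|.+1 * f P).
  apply: eq_bigr => P PU; rewrite -mulr_suml sum_nonempty_subsets_sign ?mul1r //.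
  by have [Q QM QP] := exists_minUT PU; apply/set0Pn; exists Q; rewrite inE QM.
rewrite (exchange_big_dep (fun J => (J != set0) && (J \subset M))) /=; last first.
  move=> P J _ /andP[-> /subset_trans->] //.
  by apply/subsetP=> Q; rewrite inE => /andP[].
apply: eq_bigr => J /andP[J0 JM]; rewrite mulr_sumr; apply: eq_bigl => P.
have [Q0 Q0J] := set0Pn _ J0.
rewrite J0 /= [P \in upper_bounds J]inE.
apply/andP/andP=> [[PU /subsetP JP] | [hP /forall_inP JP]].
  split; first exact: UT_partm.
  by apply/forall_inP=> Q /JP; rewrite inE => /andP[].
split; last by apply/subsetP=> Q QJ; rewrite inE (subsetP JM) ?JP.
exact: UT_refines (minUT_UT (subsetP JM _ Q0J)) hP (JP _ Q0J).
Qed.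

End ZeroSumPartitions.

Theorem lemma5p2 (a : nat -> nat) (m n : nat) (i : 'I_m -> nat)
    (eps : 'I_m -> int)
    (ha : forall k : nat, (1 <= k)%N -> (1 <= a k)%N)
    (hm : (1 <= m)%N)
    (hi : forall r : 'I_m, (1 <= i r <= n)%N)
    (heps : forall r : 'I_m, eps r = 1 \/ eps r = -1) :
  mult a i eps =
  \sum_(J : {set {set {set 'I_m}}} |
          [&& J != set0, J \subset minUT a i eps & is_join J (hat1 m)])
     (-1) ^+ (#|J|.+1).
Proof.
(* The identity holds for arbitrary a, i and eps: only hm is used. *)
rewrite /mult (sum_UT_minimal a i eps (@mu1 m)).
rewrite [RHS](eq_bigl (fun J => ((J != set0) && (J \subset minUT a i eps)) && is_join J (hat1 m))).
  rewrite [RHS]big_mkcondr; apply: eq_bigr => J /andP[_ JM].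
  rewrite sum_mu1_upper_bounds // => [|Q /(subsetP JM)/minUT_UT/UT_partm //].
  by case: ifP; rewrite ?mulr1 ?mulr0.
by move=> J; rewrite andbA.
Qed.
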